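(* Let $n\ge1$. If $E$ is an equivalence relation on $\mathbb{N}$ which is not $\Sigma^0_n$, then $E$ is not $\Sigma^0_n$-graphable. In particular, for every $n\ge1$ there are $\Pi^0_n$ equivalence relations on $\mathbb{N}$ which are not $\Sigma^0_n$-graphable.
   Context: $E$ is $\Gamma$-graphable if there is a simple undirected graph $G\subseteq\mathbb{N}\times\mathbb{N}$ in $\Gamma$ whose connectedness relation (connected by a finite path) equals $E$. *)

(* Arithmetical hierarchy on relations on nat, defined via
   first-order arithmetic formulas: a bounded (Delta_0) matrix preceded by
   alternating blocks of unbounded quantifiers. *)
From Stdlib Require Import Arith Relations RelationClasses.

(* Terms of the language of arithmetic; variables are de Bruijn indices. *)
Inductive term : Type :=
| tvar : nat -> term
| tzero : term
| tsucc : term -> term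
| tplus : term -> term -> term
| tmul : term -> term -> term.

Fixpoint teval (env : nat -> nat) (t : term) : nat :=
  match t with
  | tvar k => env k
  | tzero => 0
  | tsucc s => S (teval env s)
  | tplus s u => teval env s + teval env u
  | tmul s u => teval env s * teval env u
  end.

Definition scons (a : nat) (env : nat -> nat) : nat -> nat :=
  fun k => match k with 0 => a | S k' => env k' end.

(* Bounded (Delta_0) formulas. [bforall t phi] means: for all x < t, phi
   (t is evaluated in the outer environment, phi in the extended one). *)
Inductive bform : Type :=
| beq : term -> term -> bform
| blt : term -> term -> bform
| bnot : bform -> bform
| band : bform -> bform -> bform
| bor : bform -> bform -> bform
| bforall : term -> bform -> bform
| bexists : term -> bform -> bform.

Fixpoint bholds (env : nat -> nat) (phi : bform) : Prop :=
  match phi with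
  | beq s u => teval env s = teval env u
  | blt s u => teval env s < teval env u
  | bnot p => ~ bholds env p
  | band p q => bholds env p /\ bholds env q
  | bor p q => bholds env p \/ bholds env q
  | bforall t p => forall x, x < teval env t -> bholds (scons x env) p
  | bexists t p => exists x, x < teval env t /\ bholds (scons x env) p
  end.

Inductive form : Type :=
| fbounded : bform -> form
| fexists : form -> form
| fforall : form -> form.

Fixpoint fholds (env : nat -> nat) (f : form) : Prop :=
  match f with
  | fbounded p => bholds env p
  | fexists g => exists x, fholds (scons x env) g
  | fforall g => forall x, fholds (scons x env) g
  end.

Inductive isSigma : nat -> form -> Prop :=
| sig_b : forall n p, isSigma n (fbounded p)
| sig_ex : forall n f, isSigma (S n) f -> isSigma (S n) (fexists f)
| sig_pi : forall n f, isPi n f -> isSigma (S n) f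
with isPi : nat -> form -> Prop :=
| pi_b : forall n p, isPi n (fbounded p)
| pi_all : forall n f, isPi (S n) f -> isPi (S n) (fforall f)
| pi_sig : forall n f, isSigma n f -> isPi (S n) f.

Definition env2 (x y : nat) : nat -> nat := scons x (scons y (fun _ => 0)).

Definition Sigma0 (n : nat) (R : nat -> nat -> Prop) : Prop :=
  exists f, isSigma n f /\ forall x y, R x y <-> fholds (env2 x y) f.

Definition Pi0 (n : nat) (R : nat -> nat -> Prop) : Prop :=
  exists f, isPi n f /\ forall x y, R x y <-> fholds (env2 x y) f.

Definition graphable (Gamma : (nat -> nat -> Prop) -> Prop)
    (E : nat -> nat -> Prop) : Prop :=
  exists G : nat -> nat -> Prop,
    Gamma G /\
    (forall x y, G x y -> G y x) /\
    (forall x, ~ G x x) /\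
    (forall x y, E x y <-> clos_refl_trans nat G x y).

From Stdlib Require Import Arith Lia List Relations RelationClasses Classical
  FunctionalExtensionality ClassicalEpsilon.
Import ListNotations.

(* If G is Sigma_n, so is its reflexive-transitive closure: a finite G-path is
   coded by a single number (a Goedel beta-style code of the set of pairs
   (i, a_i)), the quantification over its steps is bounded, and Sigma_n is
   closed under bounded quantification by collection.  Hence E = rt(G) is
   Sigma_n whenever it is Sigma_n-graphable.

   For the second part, truth of Sigma_1 formulas is Sigma_1: it is witnessed
   by a finite, coded set of claims each justified by one clause of the truth
   definition.  Alternating negations give a universal Sigma_n relation
   sat(e, l), and the diagonal set D = {e | ~ sat(e, <2e, 2e+1>)} is Pi_n but
   not Sigma_n.  So is the equivalence relation whose only nontrivial classes
   are the pairs {2e, 2e+1} with e in D, which by the first part is not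
   Sigma_n-graphable. *)

(** * Renaming variables *)

Fixpoint trename (r : nat -> nat) (t : term) : term :=
  match t with
  | tvar k => tvar (r k)
  | tzero => tzero
  | tsucc s => tsucc (trename r s)
  | tplus s u => tplus (trename r s) (trename r u)
  | tmul s u => tmul (trename r s) (trename r u)
  end.

Lemma teval_trename r env t : teval env (trename r t) = teval (fun k => env (r k)) t.
Proof. induction t; simpl; auto. Qed.

Definition up_ren (r : nat -> nat) (k : nat) : nat :=
  match k with 0 => 0 | S k' => S (r k') end.

Lemma scons_up_ren x env r :
  (fun k => scons x env (up_ren r k)) = scons x (fun k => env (r k)).
Proof. apply functional_extensionality; intros [|k]; reflexivity. Qed.

Fixpoint brename (r : nat -> nat) (b : bform) : bform :=
  match b with
  | beq s u => beq (trename r s) (trename r u)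
  | blt s u => blt (trename r s) (trename r u)
  | bnot p => bnot (brename r p)
  | band p q => band (brename r p) (brename r q)
  | bor p q => bor (brename r p) (brename r q)
  | bforall t p => bforall (trename r t) (brename (up_ren r) p)
  | bexists t p => bexists (trename r t) (brename (up_ren r) p)
  end.

Lemma bholds_brename b : forall r env,
  bholds env (brename r b) <-> bholds (fun k => env (r k)) b.
Proof.
  induction b; intros r env; simpl; rewrite ?teval_trename.
  all: try setoid_rewrite IHb; try setoid_rewrite IHb1; try setoid_rewrite IHb2.
  all: try setoid_rewrite scons_up_ren; tauto.
Qed.

Fixpoint frename (r : nat -> nat) (f : form) : form :=
  match f with
  | fbounded b => fbounded (brename r b)
  | fexists g => fexists (frename (up_ren r) g)
  | fforall g => fforall (frename (up_ren r) g)
  end.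

Lemma fholds_frename f : forall r env,
  fholds env (frename r f) <-> fholds (fun k => env (r k)) f.
Proof.
  induction f; intros r env; simpl; [apply bholds_brename| |];
    setoid_rewrite IHf; setoid_rewrite scons_up_ren; tauto.
Qed.

(** * Quantifier classes *)

Fixpoint in_class (sigma : bool) (n : nat) (f : form) : Prop :=
  match f with
  | fbounded _ => True
  | fexists g => if sigma then 1 <= n /\ in_class true n g
                 else 2 <= n /\ in_class true (n - 1) g
  | fforall g => if sigma then 2 <= n /\ in_class false (n - 1) g
                 else 1 <= n /\ in_class false n g
  end.

Lemma in_class_frename f : forall sigma n r, in_class sigma n (frename r f) <-> in_class sigma n f.
Proof. induction f; intros [|] n r; simpl; rewrite ?IHf; tauto. Qed.

Lemma in_class_le f : forall sigma n m, n <= m -> in_class sigma n f -> in_class sigma m f.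
Proof.
  induction f as [b|g IH|g IH]; intros [|] n m Hnm; simpl; auto;
    intros [Hn Hg]; (split; [lia|]); [apply (IH _ n)|apply (IH _ (n - 1))|
      apply (IH _ (n - 1))|apply (IH _ n)]; auto; lia.
Qed.

Lemma in_class_succ f sigma sigma' n : in_class sigma n f -> in_class sigma' (S n) f.
Proof.
  destruct (Bool.bool_dec sigma sigma') as [<-|Hs]; [apply in_class_le; lia|].
  destruct f as [b|g|g], sigma, sigma'; simpl; try congruence; auto;
    intros [Hn Hg]; rewrite ?Nat.sub_0_r; split; auto; try lia;
    apply (in_class_le g _ (n - 1)); auto; lia.
Qed.

Scheme isSigma_mut := Induction for isSigma Sort Prop
with isPi_mut := Induction for isPi Sort Prop.

Lemma in_class_of_isSigma n f : isSigma n f -> in_class true n f.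
Proof.
  apply (isSigma_mut (fun n f _ => in_class true n f) (fun n f _ => in_class false n f));
    simpl; auto; intros; (split; [lia|auto]) || (eapply in_class_succ; eauto).
Qed.

Lemma in_class_of_isPi n f : isPi n f -> in_class false n f.
Proof.
  apply (isPi_mut (fun n f _ => in_class true n f) (fun n f _ => in_class false n f));
    simpl; auto; intros; (split; [lia|auto]) || (eapply in_class_succ; eauto).
Qed.

Lemma isSigma_isPi_of_in_class f : forall n,
  (in_class true n f -> isSigma n f) /\ (in_class false n f -> isPi n f).
Proof.
  induction f as [b|g IH|g IH]; intros n; simpl;
    (split; [intros Hf|intros Hf]); try constructor;
    destruct Hf as [Hn Hg]; destruct n as [|n]; try lia.
  - apply sig_ex, IH, Hg.
  - destruct n as [|n]; [lia|]. apply pi_sig, sig_ex, IH, Hg.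
  - destruct n as [|n]; [lia|]. apply sig_pi, pi_all, IH, Hg.
  - apply pi_all, IH, Hg.
Qed.

Lemma isSigma_iff n f : isSigma n f <-> in_class true n f.
Proof. split; [apply in_class_of_isSigma|apply isSigma_isPi_of_in_class]. Qed.

Lemma isPi_iff n f : isPi n f <-> in_class false n f.
Proof. split; [apply in_class_of_isPi|apply isSigma_isPi_of_in_class]. Qed.

Fixpoint fneg (f : form) : form :=
  match f with
  | fbounded b => fbounded (bnot b)
  | fexists g => fforall (fneg g)
  | fforall g => fexists (fneg g)
  end.

Lemma in_class_fneg f : forall sigma n, in_class sigma n f -> in_class (negb sigma) n (fneg f).
Proof.
  induction f as [b|g IH|g IH]; intros [|] n; simpl; auto;
    intros [Hn Hg]; split; auto; apply (IH _ _ Hg).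
Qed.

Lemma fholds_fneg f : forall env, fholds env (fneg f) <-> ~ fholds env f.
Proof.
  induction f as [b|g IH|g IH]; intros env; simpl; [tauto| |].
  - setoid_rewrite IH. firstorder.
  - setoid_rewrite IH. split; [firstorder|].
    intros H. apply NNPP. intros Hn. apply H. intros x. apply NNPP. eauto.
Qed.

(** * Closure under bounded quantification *)

(* A prefix of bounded quantifiers: [(true, t)] stands for [forall z < t],
   [(false, t)] for [exists z < t]; [t] is read in the environment so far. *)
Fixpoint prefix_holds (env : nat -> nat) (pre : list (bool * term))
    (Q : (nat -> nat) -> Prop) : Prop :=
  match pre with
  | [] => Q env
  | (b, t) :: pre' =>
      if b then forall z, z < teval env t -> prefix_holds (scons z env) pre' Q
      else exists z, z < teval env t /\ prefix_holds (scons z env) pre' Q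
  end.

Lemma prefix_holds_impl pre : forall env (Q1 Q2 : (nat -> nat) -> Prop),
  (forall e, Q1 e -> Q2 e) -> prefix_holds env pre Q1 -> prefix_holds env pre Q2.
Proof.
  induction pre as [|[[|] t] pre IH]; intros env Q1 Q2 HQ; simpl; auto.
  - intros H z Hz. eapply IH; eauto.
  - intros [z [Hz H]]. exists z. split; auto. eapply IH; eauto.
Qed.

Lemma prefix_holds_iff pre env (Q1 Q2 : (nat -> nat) -> Prop) :
  (forall e, Q1 e <-> Q2 e) -> (prefix_holds env pre Q1 <-> prefix_holds env pre Q2).
Proof. intros H; split; apply prefix_holds_impl; firstorder. Qed.

Lemma prefix_holds_app pre1 : forall pre2 env Q,
  prefix_holds env (pre1 ++ pre2) Q <-> prefix_holds env pre1 (fun e => prefix_holds e pre2 Q).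
Proof.
  induction pre1 as [|[[|] t] pre IH]; intros pre2 env Q; simpl; [tauto| |];
    setoid_rewrite IH; tauto.
Qed.

Lemma finite_collection T (R : nat -> nat -> Prop) :
  (forall z K K', K <= K' -> R z K -> R z K') ->
  (forall z, z < T -> exists K, R z K) -> exists K, forall z, z < T -> R z K.
Proof.
  intros Hmono. induction T as [|T IH]; intros H; [exists 0; lia|].
  destruct IH as [K1 HK1]; [intros z Hz; apply H; lia|].
  destruct (H T) as [K2 HK2]; [lia|].
  exists (max K1 K2). intros z Hz.
  destruct (Nat.eq_dec z T) as [->|Hne].
  - eapply Hmono; [|eauto]; lia.
  - eapply Hmono; [|apply HK1; lia]; lia.
Qed.

Lemma prefix_exists_collection pre : forall env (Y : (nat -> nat) -> nat -> Prop),
  (exists K, prefix_holds env pre (fun e => exists w, w < K /\ Y e w)) <->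
  prefix_holds env pre (fun e => exists w, Y e w).
Proof.
  intros env Y. split.
  { intros [K HK]. eapply prefix_holds_impl; [|exact HK]. firstorder. }
  revert env. induction pre as [|[[|] t] pre IH]; intros env; simpl.
  - intros [w Hw]. exists (S w), w. auto.
  - intros H. apply finite_collection.
    + intros z K K' HK. apply prefix_holds_impl. intros e [w [Hw HY]]. exists w. split; auto; lia.
    + intros z Hz. apply IH, H, Hz.
  - intros [z [Hz H]]. apply IH in H. destruct H as [K HK]. exists K, z. auto.
Qed.

Lemma prefix_forall_collection pre : forall env (Y : (nat -> nat) -> nat -> Prop),
  (forall K, prefix_holds env pre (fun e => forall w, w < K -> Y e w)) <->
  prefix_holds env pre (fun e => forall w, Y e w).
Proof.
  intros env Y. split.
  2:{ intros H K. eapply prefix_holds_impl; [|exact H]. firstorder. }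
  revert env. induction pre as [|[[|] t] pre IH]; intros env; simpl.
  - intros H w. apply (H (S w)). lia.
  - intros H z Hz. apply IH. intros K. apply H, Hz.
  - intros H. apply NNPP. intros Hn.
    destruct (finite_collection (teval env t) (fun z K =>
       ~ prefix_holds (scons z env) pre (fun e => forall w, w < K -> Y e w))) as [K HK].
    + intros z K K' HKK' HnK HK'. apply HnK. eapply prefix_holds_impl; [|exact HK'].
      intros e He w Hw. apply He. lia.
    + intros z Hz. apply NNPP. intros Hall. apply Hn. exists z. split; auto.
      apply IH. intros K. apply NNPP. eauto.
    + destruct (H K) as [z [Hz Hp]]. exact (HK z Hz Hp).
Qed.

Definition env_insert (d K : nat) (env : nat -> nat) (k : nat) : nat :=
  if k <? d then env k else if k =? d then K else env (k - 1).

Definition skip (d j : nat) : nat := if j <? d then j else S j.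

Lemma env_insert_skip d K env j : env_insert d K env (skip d j) = env j.
Proof.
  unfold env_insert, skip. destruct (Nat.ltb_spec j d).
  - destruct (Nat.ltb_spec j d); [reflexivity|lia].
  - destruct (Nat.ltb_spec (S j) d); [lia|]. destruct (Nat.eqb_spec (S j) d); [lia|].
    f_equal; lia.
Qed.

Lemma env_insert_skip_fun d K env : (fun j => env_insert d K env (skip d j)) = env.
Proof. apply functional_extensionality; intro; apply env_insert_skip. Qed.

Lemma env_insert_at d K env : env_insert d K env d = K.
Proof. unfold env_insert. rewrite Nat.ltb_irrefl, Nat.eqb_refl. reflexivity. Qed.

Lemma env_insert_0 K env : env_insert 0 K env = scons K env.
Proof.
  apply functional_extensionality; intros [|k]; unfold env_insert; simpl; auto.
  f_equal; lia.
Qed.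

Lemma scons_env_insert z d K env :
  scons z (env_insert d K env) = env_insert (S d) K (scons z env).
Proof.
  apply functional_extensionality; intros [|k]; unfold env_insert; simpl; auto.
  replace (S k <? S d) with (k <? d) by reflexivity. rewrite Nat.sub_0_r.
  destruct (Nat.ltb_spec k d); auto. destruct (Nat.eqb_spec k d); auto.
  destruct k; [lia|]. simpl. f_equal; lia.
Qed.

Fixpoint shift_prefix (d : nat) (pre : list (bool * term)) : list (bool * term) :=
  match pre with
  | [] => []
  | (b, t) :: pre' => (b, trename (skip d) t) :: shift_prefix (S d) pre'
  end.

Lemma prefix_holds_shift pre : forall d K env Q,
  prefix_holds (env_insert d K env) (shift_prefix d pre) Q <->
  prefix_holds env pre (fun e => Q (env_insert (d + length pre) K e)).
Proof.
  induction pre as [|[b t] pre IH]; intros d K env Q; simpl.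
  - rewrite Nat.add_0_r. tauto.
  - rewrite teval_trename, env_insert_skip_fun, <- Nat.add_succ_comm.
    destruct b; setoid_rewrite scons_env_insert; setoid_rewrite IH; tauto.
Qed.

(* Moving an unbounded quantifier over [K] from the front of the prefix
   [pre] to its end, where it becomes the bounded quantifier [_ < K]. *)
Lemma prefix_holds_move_last pre b K env Q :
  prefix_holds (scons K env) (shift_prefix 0 pre ++ [(b, tvar (length pre))]) Q <->
  prefix_holds env pre (fun e =>
    prefix_holds (env_insert (length pre) K e) [(b, tvar (length pre))] Q).
Proof. rewrite prefix_holds_app, <- env_insert_0, prefix_holds_shift. reflexivity. Qed.

Definition conn (op : bool) (A B : Prop) : Prop := if op then A /\ B else A \/ B.
Definition bconn (op : bool) (p q : bform) : bform := if op then band p q else bor p q.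

Lemma conn_exists op A (X : nat -> Prop) :
  conn op A (exists w, X w) <-> exists w, conn op A (X w).
Proof. destruct op; simpl; firstorder. exact 0. Qed.

Lemma conn_forall op A (X : nat -> Prop) :
  conn op A (forall w, X w) <-> forall w, conn op A (X w).
Proof.
  destruct op; simpl; [firstorder; exact 0|].
  split; [firstorder|]. intros H. destruct (classic A); auto. right. firstorder.
Qed.

Fixpoint bprefix (pre : list (bool * term)) (b : bform) : bform :=
  match pre with
  | [] => b
  | (q, t) :: pre' => if q then bforall t (bprefix pre' b) else bexists t (bprefix pre' b)
  end.

Lemma bholds_bprefix pre : forall env b,
  bholds env (bprefix pre b) <-> prefix_holds env pre (fun e => bholds e b).
Proof.
  induction pre as [|[[|] t] pre IH]; intros env b; simpl; [tauto| |];
    setoid_rewrite IH; tauto.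
Qed.

Definition guarded (op : bool) (b0 : bform) (sg rho : nat -> nat) (f : form)
    (e : nat -> nat) : Prop :=
  conn op (bholds (fun k => e (sg k)) b0) (fholds (fun k => e (rho k)) f).

Definition ren_past (p : nat) (sg : nat -> nat) (k : nat) : nat := S (skip p (sg k)).
Definition ren_under (p : nat) (rho : nat -> nat) (k : nat) : nat :=
  match k with 0 => 0 | S k' => S (skip p (rho k')) end.

Lemma guarded_env_insert op b0 sg rho g p K z e :
  guarded op b0 (ren_past p sg) (ren_under p rho) g (scons z (env_insert p K e)) <->
  conn op (bholds (fun k => e (sg k)) b0) (fholds (scons z (fun k => e (rho k))) g).
Proof.
  unfold guarded, ren_past, ren_under.
  replace (fun k => scons z (env_insert p K e) (S (skip p (sg k)))) with (fun k => e (sg k))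
    by (apply functional_extensionality; intro; symmetry; apply env_insert_skip).
  replace (fun k => scons z (env_insert p K e)
                   match k with 0 => 0 | S k' => S (skip p (rho k')) end)
    with (scons z (fun k => e (rho k))); [reflexivity|].
  apply functional_extensionality; intros [|k]; simpl; auto. symmetry; apply env_insert_skip.
Qed.

Section PullQuantifier.
Variables (pre : list (bool * term)) (op : bool) (b0 : bform) (sg rho : nat -> nat).

Lemma pull_exists g g' :
  (forall env, fholds env g' <->
     prefix_holds env (shift_prefix 0 pre ++ [(false, tvar (length pre))])
     (guarded op b0 (ren_past (length pre) sg) (ren_under (length pre) rho) g)) ->
  forall env, fholds env (fexists g') <->
    prefix_holds env pre (guarded op b0 sg rho (fexists g)).
Proof.
  intros Hg' env.
  transitivity (prefix_holds env pre (fun e => exists w,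
    conn op (bholds (fun k => e (sg k)) b0) (fholds (scons w (fun k => e (rho k))) g))).
  2:{ apply prefix_holds_iff; intros e. symmetry; apply conn_exists. }
  rewrite <- prefix_exists_collection. apply Morphisms_Prop.ex_iff_morphism; intros K.
  rewrite Hg', prefix_holds_move_last. apply prefix_holds_iff; intros e. simpl.
  rewrite env_insert_at. setoid_rewrite guarded_env_insert. reflexivity.
Qed.

Lemma pull_forall g g' :
  (forall env, fholds env g' <->
     prefix_holds env (shift_prefix 0 pre ++ [(true, tvar (length pre))])
     (guarded op b0 (ren_past (length pre) sg) (ren_under (length pre) rho) g)) ->
  forall env, fholds env (fforall g') <->
    prefix_holds env pre (guarded op b0 sg rho (fforall g)).
Proof.
  intros Hg' env.
  transitivity (prefix_holds env pre (fun e => forall w,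
    conn op (bholds (fun k => e (sg k)) b0) (fholds (scons w (fun k => e (rho k))) g))).
  2:{ apply prefix_holds_iff; intros e. symmetry; apply conn_forall. }
  rewrite <- prefix_forall_collection. apply Morphisms_Prop.all_iff_morphism; intros K.
  rewrite Hg', prefix_holds_move_last. apply prefix_holds_iff; intros e. simpl.
  rewrite env_insert_at. setoid_rewrite guarded_env_insert. reflexivity.
Qed.

End PullQuantifier.

(* An unbounded quantifier is pulled in front of the bounded prefix by
   collection: [(Q z < t, exists w, phi) <-> exists K, Q z < t, exists w < K, phi]. *)
Lemma in_class_guarded_prefix f : forall sigma n, in_class sigma n f ->
  forall pre op b0 sg rho, exists f', in_class sigma n f' /\
    forall env, fholds env f' <-> prefix_holds env pre (guarded op b0 sg rho f).
Proof.
  induction f as [b|g IH|g IH]; intros sigma n Hf pre op b0 sg rho.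
  - exists (fbounded (bprefix pre (bconn op (brename sg b0) (brename rho b)))).
    split; [exact I|]. intros env; simpl. rewrite bholds_bprefix. apply prefix_holds_iff.
    intros e. unfold guarded. destruct op; simpl; rewrite !bholds_brename; tauto.
  - assert (Hg : exists m, in_class true m g /\
        forall g', in_class true m g' -> in_class sigma n (fexists g')).
    { destruct sigma; simpl in Hf |- *; destruct Hf as [Hn Hg]; eexists; split; eauto. }
    destruct Hg as [m [Hg Hlift]].
    destruct (IH true m Hg (shift_prefix 0 pre ++ [(false, tvar (length pre))]) op b0
      (ren_past (length pre) sg) (ren_under (length pre) rho)) as [g' [Hg' Hsem]].
    exists (fexists g'). split; auto. apply pull_exists, Hsem.
  - assert (Hg : exists m, in_class false m g /\
        forall g', in_class false m g' -> in_class sigma n (fforall g')).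
    { destruct sigma; simpl in Hf |- *; destruct Hf as [Hn Hg]; eexists; split; eauto. }
    destruct Hg as [m [Hg Hlift]].
    destruct (IH false m Hg (shift_prefix 0 pre ++ [(true, tvar (length pre))]) op b0
      (ren_past (length pre) sg) (ren_under (length pre) rho)) as [g' [Hg' Hsem]].
    exists (fforall g'). split; auto. apply pull_forall, Hsem.
Qed.

(** * Coding pairs and finite sets *)

Definition pair (x y : nat) : nat := (x + y) * (x + y) + x.

Lemma pair_inj a b c d : pair a b = pair c d -> a = c /\ b = d.
Proof.
  unfold pair; intro H.
  assert (a + b = c + d) as Hs.
  { destruct (lt_eq_lt_dec (a + b) (c + d)) as [[Hl|He]|Hl]; [nia|auto|nia]. }
  rewrite Hs in H. split; lia.
Qed.

Lemma pair_ge_l x y : x <= pair x y. Proof. unfold pair; nia. Qed.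
Lemma pair_ge_r x y : y <= pair x y. Proof. unfold pair; nia. Qed.

(* The triple (c, d, N) codes the set of those v < N for which S (S v * d)
   divides c.  For d = N! these moduli are pairwise coprime (Goedel's beta
   function), so every finite set is coded; the quotient is bounded by c so
   that membership is expressible by a bounded formula. *)
Definition code_mem (c d N v : nat) : Prop :=
  v < N /\ exists q, q < S c /\ q * S (S v * d) = c.

Lemma code_mem_lt c d N v : code_mem c d N v -> v < N.
Proof. intros [H _]; exact H. Qed.

Lemma divide_fact k n : 1 <= k <= n -> Nat.divide k (fact n).
Proof.
  induction n as [|n IH]; intros H; [lia|].
  change (fact (S n)) with (S n * fact n).
  destruct (Nat.eq_dec k (S n)) as [->|Hne].
  - apply Nat.divide_mul_l, Nat.divide_refl.
  - apply Nat.divide_mul_r, IH; lia.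
Qed.

Definition modulus (N v : nat) : nat := S (S v * fact N).

Lemma modulus_coprime N v w : w < v < N -> Nat.gcd (modulus N v) (modulus N w) = 1.
Proof.
  intros Hwv. unfold modulus. set (d := fact N). set (g := Nat.gcd _ _).
  assert (Hv : Nat.divide g (S (S v * d))) by apply Nat.gcd_divide_l.
  assert (Hw : Nat.divide g (S (S w * d))) by apply Nat.gcd_divide_r.
  assert (Hdiff : Nat.divide g (v - w)).
  { apply (Nat.divide_add_cancel_r _ (S w * S (S v * d))); [apply Nat.divide_mul_r; auto|].
    replace (S w * S (S v * d) + (v - w)) with (S v * S (S w * d)) by nia.
    apply Nat.divide_mul_r; auto. }
  assert (Hd : Nat.divide g d).
  { eapply Nat.divide_trans; [exact Hdiff|]. apply divide_fact; lia. }
  apply Nat.divide_1_r, (Nat.divide_add_cancel_r _ (S v * d)); [apply Nat.divide_mul_r; auto|].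
  rewrite Nat.add_1_r. exact Hv.
Qed.

Definition moduli_prod (N : nat) (F : list nat) : nat :=
  fold_right (fun v acc => modulus N v * acc) 1 F.

Lemma modulus_divides_prod N F v : In v F -> Nat.divide (modulus N v) (moduli_prod N F).
Proof.
  induction F as [|w F IH]; cbn [In]; [contradiction|]. intros [->|Hin].
  - exists (moduli_prod N F). apply Nat.mul_comm.
  - apply Nat.divide_mul_r, IH, Hin.
Qed.

Lemma in_of_modulus_divides_prod N F v : v < N -> (forall w, In w F -> w < N) ->
  Nat.divide (modulus N v) (moduli_prod N F) -> In v F.
Proof.
  intros HvN. induction F as [|w F IH]; cbn [In]; intros HF Hdiv.
  - apply Nat.divide_1_r in Hdiv. unfold modulus in Hdiv. pose proof (lt_O_fact N). nia.
  - destruct (Nat.eq_dec w v) as [|Hne]; [auto|right].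
    apply IH; [auto|]. apply (Nat.gauss _ (modulus N w)); [exact Hdiv|].
    destruct (Nat.lt_total v w) as [Hl|[He|Hl]]; [|congruence|apply modulus_coprime; auto].
    rewrite Nat.gcd_comm. apply modulus_coprime. auto.
Qed.

Lemma finite_set_code F : exists c d N, forall v, code_mem c d N v <-> In v F.
Proof.
  set (N := S (list_max F)).
  assert (HF : forall w, In w F -> w < N).
  { intros w Hw. pose proof (proj1 (list_max_le F (list_max F)) (le_n _)) as Hle.
    rewrite Forall_forall in Hle. specialize (Hle w Hw). unfold N; lia. }
  exists (moduli_prod N F), (fact N), N. intros v. unfold code_mem. split.
  - intros [HvN [q [_ Hq]]]. apply (in_of_modulus_divides_prod N); auto.
    exists q. symmetry. exact Hq.
  - intros Hin. split; [auto|].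
    destruct (modulus_divides_prod N F v Hin) as [q Hq]. exists q. unfold modulus in Hq. nia.
Qed.

(** * Bounded formulas with named variables *)

Inductive nterm : Type :=
| nvar (x : nat) | nzero | nsucc (t : nterm) | nplus (t u : nterm) | nmul (t u : nterm)
| npair (t u : nterm).

Inductive nform : Type :=
| neq (s u : nterm) | nlt (s u : nterm) | nnot (p : nform) | nand (p q : nform)
| nor (p q : nform) | nall (x : nat) (t : nterm) (p : nform) | nex (x : nat) (t : nterm) (p : nform)
| nmem (c d N v : nterm).

Definition upd (a : nat -> nat) (x z : nat) (y : nat) : nat := if y =? x then z else a y.

Fixpoint neval (a : nat -> nat) (t : nterm) : nat :=
  match t with
  | nvar x => a x
  | nzero => 0
  | nsucc t => S (neval a t)
  | nplus t u => neval a t + neval a u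
  | nmul t u => neval a t * neval a u
  | npair t u => pair (neval a t) (neval a u)
  end.

Fixpoint nholds (a : nat -> nat) (p : nform) : Prop :=
  match p with
  | neq s u => neval a s = neval a u
  | nlt s u => neval a s < neval a u
  | nnot p => ~ nholds a p
  | nand p q => nholds a p /\ nholds a q
  | nor p q => nholds a p \/ nholds a q
  | nall x t p => forall z, z < neval a t -> nholds (upd a x z) p
  | nex x t p => exists z, z < neval a t /\ nholds (upd a x z) p
  | nmem c d N v => code_mem (neval a c) (neval a d) (neval a N) (neval a v)
  end.

Fixpoint idx (ctx : list nat) (x : nat) : nat :=
  match ctx with [] => 0 | y :: ctx' => if x =? y then 0 else S (idx ctx' x) end.

Fixpoint compile_term (ctx : list nat) (t : nterm) : term :=
  match t with
  | nvar x => tvar (idx ctx x)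
  | nzero => tzero
  | nsucc t => tsucc (compile_term ctx t)
  | nplus t u => tplus (compile_term ctx t) (compile_term ctx u)
  | nmul t u => tmul (compile_term ctx t) (compile_term ctx u)
  | npair t u =>
      let s := tplus (compile_term ctx t) (compile_term ctx u) in
      tplus (tmul s s) (compile_term ctx t)
  end.

Fixpoint compile (ctx : list nat) (p : nform) : bform :=
  match p with
  | neq s u => beq (compile_term ctx s) (compile_term ctx u)
  | nlt s u => blt (compile_term ctx s) (compile_term ctx u)
  | nnot p => bnot (compile ctx p)
  | nand p q => band (compile ctx p) (compile ctx q)
  | nor p q => bor (compile ctx p) (compile ctx q)
  | nall x t p => bforall (compile_term ctx t) (compile (x :: ctx) p)
  | nex x t p => bexists (compile_term ctx t) (compile (x :: ctx) p)
  | nmem c d N v =>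
      let lift t := trename S (compile_term ctx t) in
      band (blt (compile_term ctx v) (compile_term ctx N))
        (bexists (tsucc (compile_term ctx c))
          (beq (tmul (tvar 0) (tsucc (tmul (tsucc (lift v)) (lift d)))) (lift c)))
  end.

Lemma teval_compile_term t : forall ctx env a, (forall x, a x = env (idx ctx x)) ->
  teval env (compile_term ctx t) = neval a t.
Proof.
  induction t; intros ctx env a H; simpl;
    rewrite ?(IHt ctx env a H), ?(IHt1 ctx env a H), ?(IHt2 ctx env a H); auto.
Qed.

Lemma upd_idx ctx env a x z : (forall y, a y = env (idx ctx y)) ->
  forall y, upd a x z y = scons z env (idx (x :: ctx) y).
Proof. intros H y. unfold upd; simpl. destruct (y =? x); auto. Qed.

Lemma bholds_compile p : forall ctx env a, (forall x, a x = env (idx ctx x)) ->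
  (bholds env (compile ctx p) <-> nholds a p).
Proof.
  induction p; intros ctx env a H; simpl; rewrite ?(teval_compile_term _ ctx env a H).
  all: try (setoid_rewrite (IHp1 ctx env a H); setoid_rewrite (IHp2 ctx env a H)).
  all: try setoid_rewrite (IHp ctx env a H); try tauto.
  1, 2: assert (Hx : forall z, bholds (scons z env) (compile (x :: ctx) p) <-> nholds (upd a x z) p)
          by (intros z; apply IHp, upd_idx, H);
        setoid_rewrite Hx; tauto.
  setoid_rewrite teval_trename. cbn [scons].
  rewrite !(teval_compile_term _ ctx env a H). reflexivity.
Qed.

(* Names below 16 denote the de Bruijn variables with the same index. *)
Definition id_ctx : list nat := [0; 1; 2; 3; 4; 5; 6; 7; 8; 9; 10; 11; 12; 13; 14; 15].

Lemma bholds_compile_id p env :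
  bholds env (compile id_ctx p) <-> nholds (fun x => env (idx id_ctx x)) p.
Proof. apply bholds_compile. reflexivity. Qed.

(** * Reflexive-transitive closures of Sigma_n relations *)

(* The path a_0 = x, ..., a_m = y is coded by the finite set of pairs (i, a_i). *)
Definition coded_path (G : nat -> nat -> Prop) (x y : nat) : Prop :=
  x = y \/ exists c d N m, 0 < m /\ code_mem c d N (pair 0 x) /\ code_mem c d N (pair m y) /\
    (forall i, i < S m -> exists a, a < N /\ code_mem c d N (pair i a)) /\
    (forall i, i < m -> forall a, a < N -> forall b, b < N ->
        (~ code_mem c d N (pair i a) \/ ~ code_mem c d N (pair (S i) b)) \/ G a b).

Lemma clos_rt_path (G : nat -> nat -> Prop) x y : clos_refl_trans nat G x y ->
  exists f m, f 0 = x /\ f m = y /\ forall i, i < m -> G (f i) (f (S i)).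
Proof.
  intros H. apply clos_rt_rt1n in H. induction H as [x|x z y Hxz _ [f [m [H0 [Hm Hs]]]]].
  - exists (fun _ => x), 0. repeat split; intros; lia.
  - exists (fun i => match i with 0 => x | S i' => f i' end), (S m). repeat split; auto.
    intros [|i] Hi; [subst; auto|]. apply Hs; lia.
Qed.

Lemma clos_rt_of_coded_path G x y : coded_path G x y -> clos_refl_trans nat G x y.
Proof.
  intros [->|[c [d [N [m [Hm [Hx [Hy [Hne He]]]]]]]]]; [apply rt_refl|].
  assert (Hlt : forall i a, code_mem c d N (pair i a) -> a < N).
  { intros i a Ha. pose proof (code_mem_lt _ _ _ _ Ha). pose proof (pair_ge_r i a). lia. }
  assert (Hreach : forall j, j < m -> forall b, code_mem c d N (pair (S j) b) ->
            clos_refl_trans nat G x b).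
  { induction j as [|j IH]; intros Hj b Hb.
    - destruct (He 0 Hm x (Hlt _ _ Hx) b (Hlt _ _ Hb)) as [[H|H]|H]; try contradiction.
      apply rt_step, H.
    - destruct (Hne (S j) ltac:(lia)) as [a [HaN Ha]].
      apply rt_trans with a; [apply IH; auto; lia|].
      destruct (He (S j) Hj a HaN b (Hlt _ _ Hb)) as [[H|H]|H]; try contradiction.
      apply rt_step, H. }
  destruct m as [|m]; [lia|]. apply (Hreach m); auto.
Qed.

Lemma coded_path_of_clos_rt G x y : clos_refl_trans nat G x y -> coded_path G x y.
Proof.
  intros H. destruct (clos_rt_path G x y H) as [f [m [H0 [Hm Hs]]]].
  destruct m as [|m]; [left; subst; auto|right].
  destruct (finite_set_code (map (fun i => pair i (f i)) (seq 0 (S (S m))))) as [c [d [N HN]]].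
  assert (Hin : forall i, i < S (S m) -> code_mem c d N (pair i (f i))).
  { intros i Hi. apply HN, in_map_iff. exists i. split; auto. apply in_seq. lia. }
  assert (Hinv : forall i a, code_mem c d N (pair i a) -> a = f i).
  { intros i a Ha. apply HN, in_map_iff in Ha. destruct Ha as [j [Hj _]].
    apply pair_inj in Hj. destruct Hj as [-> ->]. reflexivity. }
  exists c, d, N, (S m). refine (conj _ (conj _ (conj _ (conj _ _)))); [lia| | | |].
  - rewrite <- H0. apply Hin. lia.
  - rewrite <- Hm. apply Hin. lia.
  - intros i Hi. exists (f i). split; [|apply Hin; auto].
    pose proof (code_mem_lt _ _ _ _ (Hin i Hi)). pose proof (pair_ge_r i (f i)). lia.
  - intros i Hi a _ b _.
    destruct (classic (code_mem c d N (pair i a))) as [Ha|Ha]; [|left; left; auto].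
    destruct (classic (code_mem c d N (pair (S i) b))) as [Hb|Hb]; [|left; right; auto].
    right. rewrite (Hinv _ _ Ha), (Hinv _ _ Hb). apply Hs, Hi.
Qed.

(* [path_frame] reads m, N, d, c, x, y at indices 0-5; below the bounded
   quantifiers over i, a, b (and a dummy z), [path_link_absent] reads b, a, i
   at 1-3 and N, d, c at 5-7. *)
Definition path_link_absent : nform :=
  let mem := nmem (nvar 7) (nvar 6) (nvar 5) in
  nor (nnot (mem (npair (nvar 3) (nvar 2)))) (nnot (mem (npair (nsucc (nvar 3)) (nvar 1)))).

Definition path_frame : nform :=
  let mem := nmem (nvar 3) (nvar 2) (nvar 1) in
  nand (nlt nzero (nvar 0)) (nand (mem (npair nzero (nvar 4)))
    (nand (mem (npair (nvar 0) (nvar 5)))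
      (nall 20 (nsucc (nvar 0)) (nex 21 (nvar 1) (mem (npair (nvar 20) (nvar 21))))))).

Definition edge_ren (k : nat) : nat := match k with 0 => 2 | 1 => 1 | _ => 0 end.

Lemma edge_ren_env z1 z0 X : (fun k => scons 0 (scons z1 (scons z0 X)) (edge_ren k)) = env2 z0 z1.
Proof. apply functional_extensionality; intros [|[|k]]; reflexivity. Qed.

Lemma Sigma0_coded_path n G : 1 <= n -> Sigma0 n G -> Sigma0 n (coded_path G).
Proof.
  intros Hn [fG [HfG HG]]. rewrite isSigma_iff in HfG.
  (* the trailing [forall z < 1] supplies a variable equal to 0, the value
     that [env2] gives to all variables beyond the first two *)
  destruct (in_class_guarded_prefix fG true n HfG
    [(true, tvar 0); (true, tvar 2); (true, tvar 3); (true, tsucc tzero)]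
    false (compile id_ctx path_link_absent) (fun k => k) edge_ren) as [f1 [Hf1 Hs1]].
  destruct (in_class_guarded_prefix f1 true n Hf1 [] true (compile id_ctx path_frame)
    (fun k => k) (fun k => k)) as [f2 [Hf2 Hs2]].
  assert (Hs2' : forall env, fholds env f2 <->
    (0 < env 0 /\ code_mem (env 3) (env 2) (env 1) (pair 0 (env 4)) /\
     code_mem (env 3) (env 2) (env 1) (pair (env 0) (env 5)) /\
     (forall i, i < S (env 0) ->
        exists a, a < env 1 /\ code_mem (env 3) (env 2) (env 1) (pair i a))) /\
    (forall i, i < env 0 -> forall a, a < env 1 -> forall b, b < env 1 ->
      (~ code_mem (env 3) (env 2) (env 1) (pair i a) \/
       ~ code_mem (env 3) (env 2) (env 1) (pair (S i) b)) \/ fholds (env2 a b) fG)).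
  { intros env. rewrite Hs2. unfold guarded; cbn [prefix_holds conn].
    rewrite bholds_compile_id. apply and_iff_compat_l. rewrite Hs1. cbn [prefix_holds teval].
    unfold guarded, conn. setoid_rewrite bholds_compile_id.
    split; intros H i Hi a Ha b Hb.
    - specialize (H i Hi a Ha b Hb 0 Nat.lt_0_1). rewrite edge_ren_env in H. exact H.
    - intros z Hz. replace z with 0 by lia. rewrite edge_ren_env. apply H; auto. }
  destruct (in_class_guarded_prefix (fexists (fexists (fexists (fexists f2)))) true n
    ltac:(simpl; repeat split; auto) [] false (compile id_ctx (neq (nvar 0) (nvar 1)))
    (fun k => k) (fun k => k)) as [f [Hf Hs]].
  exists f. split; [apply isSigma_iff, Hf|]. intros x y.
  rewrite Hs. unfold guarded; cbn [prefix_holds conn fholds]. rewrite bholds_compile_id.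
  setoid_rewrite Hs2'. unfold coded_path. apply or_iff_compat_l.
  setoid_rewrite HG. split; intros [c [d [N [m H]]]]; exists c, d, N, m; simpl in *; tauto.
Qed.

Lemma Sigma0_clos_refl_trans n G : 1 <= n -> Sigma0 n G -> Sigma0 n (clos_refl_trans nat G).
Proof.
  intros Hn HG. destruct (Sigma0_coded_path n G Hn HG) as [f [Hf Hs]].
  exists f. split; auto. intros x y. rewrite <- Hs.
  split; [apply coded_path_of_clos_rt|apply clos_rt_of_coded_path].
Qed.

Lemma Sigma0_of_graphable n E : 1 <= n -> graphable (Sigma0 n) E -> Sigma0 n E.
Proof.
  intros Hn [G [HG [_ [_ HE]]]].
  destruct (Sigma0_clos_refl_trans n G Hn HG) as [f [Hf Hs]].
  exists f. split; auto. intros x y. rewrite HE. apply Hs.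
Qed.

(** * A universal Sigma_1 relation *)

(* Sigma_1 formulas in negation normal form; [pexu] is the unbounded existential. *)
Inductive pform : Type :=
| peq (s u : term) | plt (s u : term) | pand (p q : pform) | por (p q : pform)
| pall (t : term) (p : pform) | pex (t : term) (p : pform) | pexu (p : pform).

Fixpoint pholds (env : nat -> nat) (p : pform) : Prop :=
  match p with
  | peq s u => teval env s = teval env u
  | plt s u => teval env s < teval env u
  | pand p q => pholds env p /\ pholds env q
  | por p q => pholds env p \/ pholds env q
  | pall t p => forall x, x < teval env t -> pholds (scons x env) p
  | pex t p => exists x, x < teval env t /\ pholds (scons x env) p
  | pexu p => exists x, pholds (scons x env) p
  end.

Fixpoint pform_of_bform (positive : bool) (b : bform) : pform :=
  match b with
  | beq u v => if positive then peq u v else por (plt u v) (plt v u)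
  | blt u v => if positive then plt u v else por (plt v u) (peq u v)
  | bnot p => pform_of_bform (negb positive) p
  | band p q => if positive then pand (pform_of_bform true p) (pform_of_bform true q)
                else por (pform_of_bform false p) (pform_of_bform false q)
  | bor p q => if positive then por (pform_of_bform true p) (pform_of_bform true q)
               else pand (pform_of_bform false p) (pform_of_bform false q)
  | bforall t p => if positive then pall t (pform_of_bform true p)
                   else pex t (pform_of_bform false p)
  | bexists t p => if positive then pex t (pform_of_bform true p)
                   else pall t (pform_of_bform false p)
  end.

Lemma pholds_pform_of_bform b : forall env,
  (pholds env (pform_of_bform true b) <-> bholds env b) /\
  (pholds env (pform_of_bform false b) <-> ~ bholds env b).
Proof.
  induction b; intros env; simpl.
  - lia.
  - lia.
  - destruct (IHb env) as [H1 H2]. rewrite H1, H2. split; [tauto|]. split; [tauto|apply NNPP].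
  - destruct (IHb1 env) as [H1 H2], (IHb2 env) as [H3 H4]. rewrite H1, H2, H3, H4.
    split; [tauto|]. split; [tauto|]. destruct (classic (bholds env b1)); tauto.
  - destruct (IHb1 env) as [H1 H2], (IHb2 env) as [H3 H4]. rewrite H1, H2, H3, H4. tauto.
  - setoid_rewrite (fun x => proj1 (IHb (scons x env))).
    setoid_rewrite (fun x => proj2 (IHb (scons x env))).
    split; [tauto|]. split; [firstorder|].
    intros H. apply NNPP. intros Hn. apply H. intros x Hx. apply NNPP. eauto.
  - setoid_rewrite (fun x => proj1 (IHb (scons x env))).
    setoid_rewrite (fun x => proj2 (IHb (scons x env))). firstorder.
Qed.

Fixpoint pform_of_sigma1 (f : form) : pform :=
  match f with
  | fbounded b => pform_of_bform true b
  | fexists g => pexu (pform_of_sigma1 g)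
  | fforall _ => peq (tsucc tzero) tzero
  end.

Lemma pholds_pform_of_sigma1 f : in_class true 1 f ->
  forall env, fholds env f <-> pholds env (pform_of_sigma1 f).
Proof.
  induction f as [b|g IH|g IH]; simpl; intros Hf env.
  - symmetry. apply pholds_pform_of_bform.
  - destruct Hf as [_ Hg]. setoid_rewrite (IH Hg). reflexivity.
  - lia.
Qed.

Fixpoint code_term (t : term) : nat :=
  match t with
  | tvar k => pair 0 k
  | tzero => pair 1 0
  | tsucc s => pair 2 (code_term s)
  | tplus s u => pair 3 (pair (code_term s) (code_term u))
  | tmul s u => pair 4 (pair (code_term s) (code_term u))
  end.

Fixpoint code_pform (p : pform) : nat :=
  match p with
  | peq s u => pair 0 (pair (code_term s) (code_term u))
  | plt s u => pair 1 (pair (code_term s) (code_term u))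
  | pand p q => pair 2 (pair (code_pform p) (code_pform q))
  | por p q => pair 3 (pair (code_pform p) (code_pform q))
  | pall t p => pair 4 (pair (code_term t) (code_pform p))
  | pex t p => pair 5 (pair (code_term t) (code_pform p))
  | pexu p => pair 6 (code_pform p)
  end.

Fixpoint code_list (L : list nat) : nat :=
  match L with [] => 0 | x :: L' => S (pair x (code_list L')) end.

Fixpoint env_of_list (L : list nat) : nat -> nat :=
  match L with [] => fun _ => 0 | x :: L' => scons x (env_of_list L') end.

(* Truth of Sigma_1 formulas is certified by finite sets of claims "term [t]
   has value [v] in environment [l]" and "formula [p] is true in [l]".  A
   claim is justified by a set [M] if it follows from claims in [M] by one
   clause of Tarski's truth definition; all witnesses are bounded by [N]. *)
Definition val_claim (t l v : nat) : nat := pair 0 (pair t (pair l v)).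
Definition true_claim (p l : nat) : nat := pair 1 (pair p l).

Definition val_justified (M : nat -> Prop) (N t l v : nat) : Prop :=
  (exists k, k < N /\ t = pair 0 k /\ ((l = 0 /\ v = 0) \/
     exists x, x < N /\ exists l', l' < N /\ l = S (pair x l') /\
       ((k = 0 /\ v = x) \/ exists k', k' < N /\ k = S k' /\ M (val_claim (pair 0 k') l' v))))
  \/ (t = pair 1 0 /\ v = 0)
  \/ (exists s, s < N /\ exists v', v' < N /\ t = pair 2 s /\ v = S v' /\ M (val_claim s l v'))
  \/ (exists s, s < N /\ exists u, u < N /\ exists v1, v1 < N /\ exists v2, v2 < N /\
        t = pair 3 (pair s u) /\ v = v1 + v2 /\ M (val_claim s l v1) /\ M (val_claim u l v2))
  \/ (exists s, s < N /\ exists u, u < N /\ exists v1, v1 < N /\ exists v2, v2 < N /\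
        t = pair 4 (pair s u) /\ v = v1 * v2 /\ M (val_claim s l v1) /\ M (val_claim u l v2)).

Definition true_justified (M : nat -> Prop) (N p l : nat) : Prop :=
  (exists s, s < N /\ exists u, u < N /\ exists v1, v1 < N /\ exists v2, v2 < N /\
     p = pair 0 (pair s u) /\ v1 = v2 /\ M (val_claim s l v1) /\ M (val_claim u l v2))
  \/ (exists s, s < N /\ exists u, u < N /\ exists v1, v1 < N /\ exists v2, v2 < N /\
     p = pair 1 (pair s u) /\ v1 < v2 /\ M (val_claim s l v1) /\ M (val_claim u l v2))
  \/ (exists q, q < N /\ exists r, r < N /\ p = pair 2 (pair q r) /\
     M (true_claim q l) /\ M (true_claim r l))
  \/ (exists q, q < N /\ exists r, r < N /\ p = pair 3 (pair q r) /\
     (M (true_claim q l) \/ M (true_claim r l)))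
  \/ (exists t, t < N /\ exists q, q < N /\ exists v, v < N /\ p = pair 4 (pair t q) /\
       M (val_claim t l v) /\ forall x, x < v -> M (true_claim q (S (pair x l))))
  \/ (exists t, t < N /\ exists q, q < N /\ exists v, v < N /\ p = pair 5 (pair t q) /\
       M (val_claim t l v) /\ exists x, x < v /\ M (true_claim q (S (pair x l))))
  \/ (exists q, q < N /\ exists x, x < N /\ p = pair 6 q /\ M (true_claim q (S (pair x l)))).

Definition justified (M : nat -> Prop) (N z : nat) : Prop :=
  (exists t, t < N /\ exists l, l < N /\ exists v, v < N /\
     z = val_claim t l v /\ val_justified M N t l v)
  \/ (exists p, p < N /\ exists l, l < N /\ z = true_claim p l /\ true_justified M N p l).

Definition closed_cert (c d N : nat) : Prop :=
  forall z, z < N -> code_mem c d N z -> justified (code_mem c d N) N z.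

Definition sat1 (e l : nat) : Prop :=
  exists c d N, closed_cert c d N /\ code_mem c d N (true_claim e l).

(* The same definitions as bounded formulas: variables 0, 1, 2 hold N, d, c,
   variable 10 the claim, 20-22 its components and 30-33 the witnesses. *)
Fixpoint nnum (k : nat) : nterm := match k with 0 => nzero | S k => nsucc (nnum k) end.
Definition nval_claim t l v := npair nzero (npair t (npair l v)).
Definition ntrue_claim p l := npair (nsucc nzero) (npair p l).
Definition nin_cert w := nmem (nvar 2) (nvar 1) (nvar 0) w.
Definition nex_lt_N x body := nex x (nvar 0) body.

Definition nval_var_justified : nform :=
  nex_lt_N 30 (nand (neq (nvar 20) (npair nzero (nvar 30)))
    (nor (nand (neq (nvar 21) nzero) (neq (nvar 22) nzero))
      (nex_lt_N 31 (nex_lt_N 32 (nand (neq (nvar 21) (nsucc (npair (nvar 31) (nvar 32))))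
        (nor (nand (neq (nvar 30) nzero) (neq (nvar 22) (nvar 31)))
          (nex_lt_N 33 (nand (neq (nvar 30) (nsucc (nvar 33)))
            (nin_cert (nval_claim (npair nzero (nvar 33)) (nvar 32) (nvar 22))))))))))).

Definition nval_succ_justified : nform :=
  nex_lt_N 30 (nex_lt_N 31 (nand (neq (nvar 20) (npair (nnum 2) (nvar 30)))
    (nand (neq (nvar 22) (nsucc (nvar 31)))
          (nin_cert (nval_claim (nvar 30) (nvar 21) (nvar 31)))))).

Definition nval_op_justified (tag : nat) (op : nterm -> nterm -> nterm) : nform :=
  nex_lt_N 30 (nex_lt_N 31 (nex_lt_N 32 (nex_lt_N 33
    (nand (neq (nvar 20) (npair (nnum tag) (npair (nvar 30) (nvar 31))))
    (nand (neq (nvar 22) (op (nvar 32) (nvar 33)))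
      (nand (nin_cert (nval_claim (nvar 30) (nvar 21) (nvar 32)))
            (nin_cert (nval_claim (nvar 31) (nvar 21) (nvar 33))))))))).

Definition nval_justified : nform :=
  nor nval_var_justified (nor (nand (neq (nvar 20) (npair (nnum 1) nzero)) (neq (nvar 22) nzero))
   (nor nval_succ_justified (nor (nval_op_justified 3 nplus) (nval_op_justified 4 nmul)))).

Definition ntrue_atom_justified (tag : nat) (rel : nterm -> nterm -> nform) : nform :=
  nex_lt_N 30 (nex_lt_N 31 (nex_lt_N 32 (nex_lt_N 33
    (nand (neq (nvar 20) (npair (nnum tag) (npair (nvar 30) (nvar 31))))
    (nand (rel (nvar 32) (nvar 33))
      (nand (nin_cert (nval_claim (nvar 30) (nvar 21) (nvar 32)))
            (nin_cert (nval_claim (nvar 31) (nvar 21) (nvar 33))))))))).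

Definition ntrue_conn_justified (tag : nat) (op : nform -> nform -> nform) : nform :=
  nex_lt_N 30 (nex_lt_N 31 (nand (neq (nvar 20) (npair (nnum tag) (npair (nvar 30) (nvar 31))))
    (op (nin_cert (ntrue_claim (nvar 30) (nvar 21)))
        (nin_cert (ntrue_claim (nvar 31) (nvar 21)))))).

Definition ntrue_bquant_justified (tag : nat) (quant : nat -> nterm -> nform -> nform) : nform :=
  nex_lt_N 30 (nex_lt_N 31 (nex_lt_N 32
    (nand (neq (nvar 20) (npair (nnum tag) (npair (nvar 30) (nvar 31))))
    (nand (nin_cert (nval_claim (nvar 30) (nvar 21) (nvar 32)))
      (quant 33 (nvar 32)
        (nin_cert (ntrue_claim (nvar 31) (nsucc (npair (nvar 33) (nvar 21)))))))))).

Definition ntrue_exists_justified : nform :=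
  nex_lt_N 30 (nex_lt_N 31 (nand (neq (nvar 20) (npair (nnum 6) (nvar 30)))
    (nin_cert (ntrue_claim (nvar 30) (nsucc (npair (nvar 31) (nvar 21))))))).

Definition ntrue_justified : nform :=
  nor (ntrue_atom_justified 0 neq) (nor (ntrue_atom_justified 1 nlt)
  (nor (ntrue_conn_justified 2 nand) (nor (ntrue_conn_justified 3 nor)
  (nor (ntrue_bquant_justified 4 nall) (nor (ntrue_bquant_justified 5 nex)
   ntrue_exists_justified))))).

Definition njustified : nform :=
  nor (nex_lt_N 20 (nex_lt_N 21 (nex_lt_N 22
        (nand (neq (nvar 10) (nval_claim (nvar 20) (nvar 21) (nvar 22))) nval_justified))))
      (nex_lt_N 20 (nex_lt_N 21
        (nand (neq (nvar 10) (ntrue_claim (nvar 20) (nvar 21))) ntrue_justified))).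

Definition nsat1_matrix : nform :=
  nand (nall 10 (nvar 0) (nor (nnot (nin_cert (nvar 10))) njustified))
       (nin_cert (ntrue_claim (nvar 3) (nvar 4))).

Lemma nholds_nsat1_matrix a : nholds a nsat1_matrix <->
  (forall z, z < a 0 ->
     ~ code_mem (a 2) (a 1) (a 0) z \/ justified (code_mem (a 2) (a 1) (a 0)) (a 0) z) /\
  code_mem (a 2) (a 1) (a 0) (true_claim (a 3) (a 4)).
Proof. reflexivity. Qed.

Definition sat1_form : form := fexists (fexists (fexists (fbounded (compile id_ctx nsat1_matrix)))).

Lemma fholds_sat1_form env : fholds env sat1_form <-> sat1 (env 0) (env 1).
Proof.
  unfold sat1_form, sat1, closed_cert. cbn [fholds].
  setoid_rewrite bholds_compile_id. setoid_rewrite nholds_nsat1_matrix.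
  cbn [idx id_ctx Nat.eqb scons].
  split; intros [c [d [N [Hcl Hm]]]]; exists c, d, N; split; auto; intros z Hz.
  - intros Hzm. destruct (Hcl z Hz); tauto.
  - destruct (classic (code_mem c d N z)); auto.
Qed.

Ltac pair_injections := repeat match goal with
  | H : pair _ _ = pair _ _ |- _ => apply pair_inj in H; destruct H as [? ?]
  | H : S _ = S _ |- _ => injection H as H
  end; subst; try discriminate.

Ltac decompose_hyps := repeat match goal with
  | H : _ /\ _ |- _ => destruct H
  | H : exists _, _ |- _ => destruct H
  | H : _ \/ _ |- _ => destruct H
  end; cbn [code_list] in *; pair_injections.

Section Soundness.
Variables (c d N : nat).
Hypothesis closed : closed_cert c d N.

Lemma val_claim_justified t l v :
  code_mem c d N (val_claim t l v) -> val_justified (code_mem c d N) N t l v.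
Proof.
  intros Hm. destruct (closed _ (code_mem_lt _ _ _ _ Hm) Hm) as
    [[t' [_ [l' [_ [v' [_ [E J]]]]]]]|[p [_ [l' [_ [E J]]]]]];
    unfold val_claim, true_claim in E; pair_injections; auto.
Qed.

Lemma true_claim_justified p l :
  code_mem c d N (true_claim p l) -> true_justified (code_mem c d N) N p l.
Proof.
  intros Hm. destruct (closed _ (code_mem_lt _ _ _ _ Hm) Hm) as
    [[t' [_ [l' [_ [v' [_ [E J]]]]]]]|[p' [_ [l' [_ [E J]]]]]];
    unfold val_claim, true_claim in E; pair_injections; auto.
Qed.

Lemma var_claim_sound L : forall k v,
  code_mem c d N (val_claim (pair 0 k) (code_list L) v) -> v = env_of_list L k.
Proof.
  induction L as [|x L IH]; intros k v Hm; apply val_claim_justified in Hm;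
    unfold val_justified in Hm; decompose_hyps; simpl; auto.
Qed.

Lemma val_claim_sound T : forall L v,
  code_mem c d N (val_claim (code_term T) (code_list L) v) -> v = teval (env_of_list L) T.
Proof.
  induction T; intros L v Hm; simpl in Hm |- *; [apply var_claim_sound, Hm|..];
    apply val_claim_justified in Hm; unfold val_justified in Hm; decompose_hyps; f_equal; auto.
Qed.

Lemma true_claim_sound p : forall L,
  code_mem c d N (true_claim (code_pform p) (code_list L)) -> pholds (env_of_list L) p.
Proof.
  induction p; intros L Hm; simpl in Hm |- *; apply true_claim_justified in Hm;
    unfold true_justified in Hm; decompose_hyps.
  all: repeat match goal with
    | H : code_mem c d N (val_claim (code_term ?t) _ _) |- _ => apply val_claim_sound in H
    end; subst; auto.
  - intros x Hx. apply (IHp (x :: L)); simpl; auto.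
  - eexists. split; [eassumption|]. apply (IHp (_ :: L)); simpl; eassumption.
  - eexists. apply (IHp (_ :: L)); simpl; eassumption.
Qed.

End Soundness.

Lemma sat1_sound p L : sat1 (code_pform p) (code_list L) -> pholds (env_of_list L) p.
Proof. intros [c [d [N [Hc Hm]]]]. eapply true_claim_sound; eauto. Qed.

Ltac pair_bounds := repeat match goal with
  | H : context [pair ?a ?b] |- _ =>
      lazymatch goal with
      | _ : a <= pair a b |- _ => fail
      | _ => pose proof (pair_ge_l a b); pose proof (pair_ge_r a b)
      end
  | |- context [pair ?a ?b] =>
      lazymatch goal with
      | _ : a <= pair a b |- _ => fail
      | _ => pose proof (pair_ge_l a b); pose proof (pair_ge_r a b)
      end
  end.

Ltac bound := unfold val_claim, true_claim in *; pair_bounds; lia.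
Ltac take x := exists x; split; [bound|].

Section TarskiClauses.
Variables (M : nat -> Prop) (N : nat).
Hypothesis below_N : forall w, M w -> w < N.

Ltac bound_claims := repeat match goal with
  | H : M ?w |- _ =>
      lazymatch goal with
      | _ : w < N |- _ => fail
      | _ => pose proof (below_N w H)
      end
  end.

Lemma justified_var_nil k :
  M (val_claim (pair 0 k) 0 0) -> justified M N (val_claim (pair 0 k) 0 0).
Proof.
  intros; bound_claims. left. take (pair 0 k). take 0. take 0. split; [reflexivity|].
  left. take k. auto.
Qed.

Lemma justified_var_head x l : M (val_claim (pair 0 0) (S (pair x l)) x) ->
  justified M N (val_claim (pair 0 0) (S (pair x l)) x).
Proof.
  intros; bound_claims. left. take (pair 0 0). take (S (pair x l)). take x.
  split; [reflexivity|]. left. take 0. split; [reflexivity|]. right. take x. take l. auto.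
Qed.

Lemma justified_var_tail k x l v : M (val_claim (pair 0 (S k)) (S (pair x l)) v) ->
  M (val_claim (pair 0 k) l v) -> justified M N (val_claim (pair 0 (S k)) (S (pair x l)) v).
Proof.
  intros; bound_claims. left. take (pair 0 (S k)). take (S (pair x l)). take v.
  split; [reflexivity|]. left. take (S k). split; [reflexivity|]. right. take x. take l.
  split; [reflexivity|]. right. take k. auto.
Qed.

Lemma justified_zero l : M (val_claim (pair 1 0) l 0) -> justified M N (val_claim (pair 1 0) l 0).
Proof.
  intros; bound_claims. left. take (pair 1 0). take l. take 0. split; [reflexivity|].
  right; left; auto.
Qed.

Lemma justified_succ s l v : M (val_claim (pair 2 s) l (S v)) -> M (val_claim s l v) ->
  justified M N (val_claim (pair 2 s) l (S v)).
Proof.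
  intros; bound_claims. left. take (pair 2 s). take l. take (S v). split; [reflexivity|].
  do 2 right; left. take s. take v. auto.
Qed.

Lemma justified_plus s u l v1 v2 : M (val_claim (pair 3 (pair s u)) l (v1 + v2)) ->
  M (val_claim s l v1) -> M (val_claim u l v2) ->
  justified M N (val_claim (pair 3 (pair s u)) l (v1 + v2)).
Proof.
  intros; bound_claims. left. take (pair 3 (pair s u)). take l. take (v1 + v2).
  split; [reflexivity|]. do 3 right; left. take s. take u. take v1. take v2. auto.
Qed.

Lemma justified_mul s u l v1 v2 : M (val_claim (pair 4 (pair s u)) l (v1 * v2)) ->
  M (val_claim s l v1) -> M (val_claim u l v2) ->
  justified M N (val_claim (pair 4 (pair s u)) l (v1 * v2)).
Proof.
  intros; bound_claims. left. take (pair 4 (pair s u)). take l. take (v1 * v2).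
  split; [reflexivity|]. do 4 right. take s. take u. take v1. take v2. auto.
Qed.

Lemma justified_eq s u l v : M (true_claim (pair 0 (pair s u)) l) ->
  M (val_claim s l v) -> M (val_claim u l v) -> justified M N (true_claim (pair 0 (pair s u)) l).
Proof.
  intros; bound_claims. right. take (pair 0 (pair s u)). take l. split; [reflexivity|].
  left. take s. take u. take v. take v. auto.
Qed.

Lemma justified_lt s u l v1 v2 : v1 < v2 -> M (true_claim (pair 1 (pair s u)) l) ->
  M (val_claim s l v1) -> M (val_claim u l v2) ->
  justified M N (true_claim (pair 1 (pair s u)) l).
Proof.
  intros; bound_claims. right. take (pair 1 (pair s u)). take l. split; [reflexivity|].
  right; left. take s. take u. take v1. take v2. auto.
Qed.

Lemma justified_and q r l : M (true_claim (pair 2 (pair q r)) l) ->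
  M (true_claim q l) -> M (true_claim r l) -> justified M N (true_claim (pair 2 (pair q r)) l).
Proof.
  intros; bound_claims. right. take (pair 2 (pair q r)). take l. split; [reflexivity|].
  do 2 right; left. take q. take r. auto.
Qed.

Lemma justified_or q r l : M (true_claim (pair 3 (pair q r)) l) ->
  M (true_claim q l) \/ M (true_claim r l) -> justified M N (true_claim (pair 3 (pair q r)) l).
Proof.
  intros; bound_claims. right. take (pair 3 (pair q r)). take l. split; [reflexivity|].
  do 3 right; left. take q. take r. auto.
Qed.

Lemma justified_all t q l v : M (true_claim (pair 4 (pair t q)) l) -> M (val_claim t l v) ->
  (forall x, x < v -> M (true_claim q (S (pair x l)))) ->
  justified M N (true_claim (pair 4 (pair t q)) l).
Proof.
  intros; bound_claims. right. take (pair 4 (pair t q)). take l. split; [reflexivity|].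
  do 4 right; left. take t. take q. take v. auto.
Qed.

Lemma justified_ex t q l v x : x < v -> M (true_claim (pair 5 (pair t q)) l) ->
  M (val_claim t l v) -> M (true_claim q (S (pair x l))) ->
  justified M N (true_claim (pair 5 (pair t q)) l).
Proof.
  intros; bound_claims. right. take (pair 5 (pair t q)). take l. split; [reflexivity|].
  do 5 right; left. take t. take q. take v. eauto.
Qed.

Lemma justified_exu q l x : M (true_claim (pair 6 q) l) -> M (true_claim q (S (pair x l))) ->
  justified M N (true_claim (pair 6 q) l).
Proof.
  intros; bound_claims. right. take (pair 6 q). take l. split; [reflexivity|].
  do 6 right. take q. take x. auto.
Qed.

End TarskiClauses.

Fixpoint var_cert (L : list nat) (k : nat) : list nat :=
  match L with
  | [] => [val_claim (pair 0 k) 0 0]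
  | x :: L' => val_claim (pair 0 k) (code_list L) (env_of_list L k) ::
               match k with 0 => [] | S k' => var_cert L' k' end
  end.

Fixpoint val_cert (T : term) (L : list nat) : list nat :=
  val_claim (code_term T) (code_list L) (teval (env_of_list L) T) ::
  match T with
  | tvar k => var_cert L k
  | tzero => []
  | tsucc s => val_cert s L
  | tplus s u | tmul s u => val_cert s L ++ val_cert u L
  end.

Definition wit (Q : nat -> Prop) : nat := epsilon (inhabits 0) Q.

Lemma wit_spec Q : (exists x, Q x) -> Q (wit Q).
Proof. apply epsilon_spec. Qed.

Fixpoint true_cert (p : pform) (L : list nat) : list nat :=
  let env := env_of_list L in
  true_claim (code_pform p) (code_list L) ::
  match p with
  | peq s u | plt s u => val_cert s L ++ val_cert u L
  | pand q r => true_cert q L ++ true_cert r L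
  | por q r => if excluded_middle_informative (pholds env q) then true_cert q L else true_cert r L
  | pall t q => val_cert t L ++ flat_map (fun x => true_cert q (x :: L)) (seq 0 (teval env t))
  | pex t q => val_cert t L ++
      true_cert q (wit (fun x => x < teval env t /\ pholds (env_of_list (x :: L)) q) :: L)
  | pexu q => true_cert q (wit (fun x => pholds (env_of_list (x :: L)) q) :: L)
  end.

Lemma var_cert_head L k : In (val_claim (pair 0 k) (code_list L) (env_of_list L k)) (var_cert L k).
Proof. destruct L; simpl; left; reflexivity. Qed.

Lemma val_cert_head T L :
  In (val_claim (code_term T) (code_list L) (teval (env_of_list L) T)) (val_cert T L).
Proof. destruct T; left; reflexivity. Qed.

Lemma true_cert_head p L : In (true_claim (code_pform p) (code_list L)) (true_cert p L).
Proof. destruct p; left; reflexivity. Qed.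

#[local] Hint Resolve in_or_app in_eq in_cons var_cert_head val_cert_head true_cert_head : cert.

Ltac in_cert HF := apply HF; first [solve [auto with cert] | simpl; auto with cert].
Ltac sub_cert HF := let w := fresh "w" in let Hw := fresh "Hw" in
  intros w Hw; apply HF; simpl; auto with cert.

Section CertificatesJustified.
Variables (M : nat -> Prop) (N : nat).
Hypothesis below_N : forall w, M w -> w < N.

Lemma var_cert_justified L : forall k, (forall w, In w (var_cert L k) -> M w) ->
  forall z, In z (var_cert L k) -> justified M N z.
Proof.
  induction L as [|x L IH]; intros k HF z [<-|Hz].
  - apply justified_var_nil; auto. in_cert HF.
  - destruct Hz.
  - destruct k as [|k]; [apply justified_var_head|apply justified_var_tail]; auto; in_cert HF.
  - destruct k as [|k]; [destruct Hz|]. apply (IH k); auto. sub_cert HF.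
Qed.

Lemma val_cert_justified T : forall L, (forall w, In w (val_cert T L) -> M w) ->
  forall z, In z (val_cert T L) -> justified M N z.
Proof.
  induction T as [k| |s IH|s IHs u IHu|s IHs u IHu]; intros L HF z Hz; simpl in Hz.
  - apply (var_cert_justified L k); [sub_cert HF|]. destruct Hz as [<-|Hz]; auto with cert.
  - destruct Hz as [<-|[]]. apply justified_zero; auto. in_cert HF.
  - destruct Hz as [<-|Hz]; [apply justified_succ; auto; in_cert HF|].
    apply (IH L); auto. sub_cert HF.
  - destruct Hz as [<-|Hz]; [apply justified_plus; auto; in_cert HF|].
    apply in_app_or in Hz as [Hz|Hz]; [apply (IHs L)|apply (IHu L)]; auto; sub_cert HF.
  - destruct Hz as [<-|Hz]; [apply justified_mul; auto; in_cert HF|].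
    apply in_app_or in Hz as [Hz|Hz]; [apply (IHs L)|apply (IHu L)]; auto; sub_cert HF.
Qed.

Lemma true_cert_head_justified p L : pholds (env_of_list L) p ->
  (forall w, In w (true_cert p L) -> M w) ->
  justified M N (true_claim (code_pform p) (code_list L)).
Proof.
  intros Hp HF.
  destruct p as [s u|s u|q r|q r|t q|t q|q]; simpl in Hp |- *.
  - apply justified_eq with (v := teval (env_of_list L) s); auto;
      [in_cert HF|in_cert HF|rewrite Hp; in_cert HF].
  - apply justified_lt with (v1 := teval (env_of_list L) s) (v2 := teval (env_of_list L) u);
      auto; in_cert HF.
  - apply justified_and; auto; in_cert HF.
  - apply justified_or; auto; [in_cert HF|]. revert HF; simpl.
    destruct (excluded_middle_informative (pholds (env_of_list L) q)) as [Hq|Hq]; intros HF;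
      [left|right; destruct Hp as [|Hr]; [contradiction|]]; in_cert HF.
  - apply justified_all with (v := teval (env_of_list L) t); auto; [in_cert HF|in_cert HF|].
    intros x Hx. apply HF. simpl. right. apply in_or_app. right.
    apply in_flat_map. exists x. split; [apply in_seq; lia|apply (true_cert_head q (x :: L))].
  - set (x := wit (fun x => x < teval (env_of_list L) t /\ pholds (env_of_list (x :: L)) q)) in HF.
    assert (Hx : x < teval (env_of_list L) t /\ pholds (env_of_list (x :: L)) q)
      by (apply wit_spec, Hp).
    apply (justified_ex M N below_N) with (v := teval (env_of_list L) t) (x := x);
      [apply Hx|in_cert HF|in_cert HF|].
    apply HF. simpl. right. apply in_or_app. right. exact (true_cert_head q (x :: L)).
  - set (x := wit (fun x => pholds (env_of_list (x :: L)) q)) in HF.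
    apply justified_exu with (x := x); auto; [in_cert HF|].
    apply HF. simpl. right. exact (true_cert_head q (x :: L)).
Qed.

Lemma true_cert_justified p : forall L, pholds (env_of_list L) p ->
  (forall w, In w (true_cert p L) -> M w) -> forall z, In z (true_cert p L) -> justified M N z.
Proof.
  induction p as [s u|s u|q IHq r IHr|q IHq r IHr|t q IH|t q IH|q IH];
    intros L Hp HF z [<-|Hz]; try (apply true_cert_head_justified; auto; fail); simpl in Hp, Hz.
  - apply in_app_or in Hz as [Hz|Hz]; eapply val_cert_justified; eauto; sub_cert HF.
  - apply in_app_or in Hz as [Hz|Hz]; eapply val_cert_justified; eauto; sub_cert HF.
  - apply in_app_or in Hz as [Hz|Hz]; [apply (IHq L)|apply (IHr L)]; try tauto; sub_cert HF.
  - revert HF Hz. simpl. destruct (excluded_middle_informative (pholds (env_of_list L) q));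
      intros HF Hz; [apply (IHq L)|apply (IHr L)]; auto; try tauto; sub_cert HF.
  - apply in_app_or in Hz as [Hz|Hz]; [eapply val_cert_justified; eauto; sub_cert HF|].
    apply in_flat_map in Hz as [x [Hx Hz]]. apply in_seq in Hx.
    apply (IH (x :: L)); auto; [apply Hp; lia|].
    intros w Hw. apply HF. simpl. right. apply in_or_app. right.
    apply in_flat_map. exists x. split; [apply in_seq; lia|exact Hw].
  - set (x := wit (fun x => x < teval (env_of_list L) t /\ pholds (env_of_list (x :: L)) q))
      in Hz, HF.
    assert (Hx : x < teval (env_of_list L) t /\ pholds (env_of_list (x :: L)) q)
      by (apply wit_spec, Hp).
    apply in_app_or in Hz as [Hz|Hz]; [eapply val_cert_justified; eauto; sub_cert HF|].
    apply (IH (x :: L)); auto; [apply Hx|sub_cert HF].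
  - set (x := wit (fun x => pholds (env_of_list (x :: L)) q)) in Hz, HF.
    apply (IH (x :: L)); auto; [apply wit_spec, Hp|sub_cert HF].
Qed.

End CertificatesJustified.

Lemma sat1_complete p L : pholds (env_of_list L) p -> sat1 (code_pform p) (code_list L).
Proof.
  intros Hp. destruct (finite_set_code (true_cert p L)) as [c [d [N HN]]].
  exists c, d, N. split; [|apply HN, true_cert_head].
  intros z _ Hz. apply HN in Hz. apply (true_cert_justified _ N (code_mem_lt c d N) p L); auto.
  intros w Hw. apply HN, Hw.
Qed.

(** * Universal Sigma_n relations *)

(* A Sigma_(m+2) formula [exists x, g] with [g] in Pi_(m+1) gets the index
   of the Sigma_(m+1) formula [fneg g]. *)
Fixpoint sat (m : nat) : nat -> nat -> Prop :=
  match m with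
  | 0 => sat1
  | S m' => fun e l => exists x, ~ sat m' e (S (pair x l))
  end.

Lemma in_class_exists2 n g : in_class false n g -> exists h, in_class false n h /\ forall env,
  (exists x y, fholds (scons y (scons x env)) g) <-> exists c, fholds (scons c env) h.
Proof.
  intros Hg.
  set (ren := fun k => match k with 0 => 0 | 1 => 1 | S (S j) => S (S (S j)) end).
  destruct (in_class_guarded_prefix g false n Hg [(false, tsucc (tvar 0)); (false, tsucc (tvar 1))]
     true (beq tzero tzero) (fun k => k) ren) as [h [Hh Hs]].
  exists h. split; auto. intros env.
  assert (Eren : forall c x y,
    (fun k => scons y (scons x (scons c env)) (ren k)) = scons y (scons x env)).
  { intros c x y. apply functional_extensionality; intros [|[|k]]; reflexivity. }
  setoid_rewrite Hs. unfold guarded; cbn [prefix_holds teval conn bholds]. setoid_rewrite Eren.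
  split.
  - intros [x [y H]]. exists (x + y), x. split; [simpl; lia|]. exists y. simpl. split; [lia|auto].
  - intros [c [x [Hx [y [Hy [Htriv H]]]]]]. eauto.
Qed.

Lemma sigma_as_exists_pi m f : in_class true (S (S m)) f -> exists h, in_class false (S m) h /\
  forall env, fholds env f <-> exists c, fholds (scons c env) h.
Proof.
  induction f as [b|g IH|g IH]; intros Hf.
  - exists (fbounded (brename S b)). split; [exact I|]. intros env. cbn [fholds].
    setoid_rewrite bholds_brename. split; [exists 0|intros [c H]]; auto.
  - destruct Hf as [_ Hg]. destruct (IH Hg) as [h' [Hh' Hs']].
    destruct (in_class_exists2 (S m) h' Hh') as [h [Hh Hs]].
    exists h. split; auto. intros env. simpl. rewrite <- Hs. setoid_rewrite <- Hs'. reflexivity.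
  - exists (frename S (fforall g)). split.
    + apply in_class_frename. destruct Hf as [_ Hg]. split; [lia|exact Hg].
    + intros env. setoid_rewrite fholds_frename. split; [exists 0|intros [c H]]; auto.
Qed.

Lemma sat_universal m : forall f, in_class true (S m) f ->
  exists e, forall L, fholds (env_of_list L) f <-> sat m e (code_list L).
Proof.
  induction m as [|m IH]; intros f Hf.
  - exists (code_pform (pform_of_sigma1 f)). intros L. rewrite (pholds_pform_of_sigma1 f Hf).
    split; [apply sat1_complete|apply sat1_sound].
  - destruct (sigma_as_exists_pi m f Hf) as [h [Hh Hs]].
    destruct (IH (fneg h) (in_class_fneg h false (S m) Hh)) as [e He].
    exists e. intros L. rewrite Hs. simpl.
    apply Morphisms_Prop.ex_iff_morphism. intros c.
    rewrite <- (He (c :: L)), fholds_fneg. split; [tauto|apply NNPP].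
Qed.

Lemma in_class_sat m : exists f, in_class true (S m) f /\
  forall env, fholds env f <-> sat m (env 0) (env 1).
Proof.
  induction m as [|m [f [Hf Hs]]].
  - exists sat1_form. split; [simpl; repeat split; lia|]. apply fholds_sat1_form.
  - (* [exists x, forall l, l <> S (pair x l0) \/ ~ sat m e l], with l, x, e, l0
       at indices 0-3 *)
    set (f1 := frename (fun j => match j with 0 => 2 | _ => 0 end) (fneg f)).
    assert (Hf1 : in_class false (S m) f1) by (apply in_class_frename, (in_class_fneg f true), Hf).
    destruct (in_class_guarded_prefix f1 false (S m) Hf1 [] false
       (compile id_ctx (nnot (neq (nvar 0) (nsucc (npair (nvar 1) (nvar 3))))))
       (fun k => k) (fun k => k))
       as [h [Hh Hhs]].
    exists (fexists (fforall h)). split; [simpl; repeat split; auto; lia|].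
    intros env. cbn [fholds sat]. setoid_rewrite Hhs. unfold guarded; cbn [prefix_holds conn].
    setoid_rewrite bholds_compile_id. unfold f1. setoid_rewrite fholds_frename.
    setoid_rewrite fholds_fneg. cbn [nholds neval idx id_ctx Nat.eqb scons].
    setoid_rewrite Hs. cbn [scons].
    apply Morphisms_Prop.ex_iff_morphism. intros x. split.
    + intros H HU. destruct (H (S (pair x (env 1)))); auto.
    + intros H l. destruct (Nat.eq_dec l (S (pair x (env 1)))) as [->|]; auto.
Qed.

(** * A Pi_n equivalence relation that is not Sigma_n *)

Definition twin_classes (D : nat -> Prop) (x y : nat) : Prop :=
  x = y \/ (Nat.div2 x = Nat.div2 y /\ D (Nat.div2 x)).

Lemma twin_classes_equiv D : Equivalence (twin_classes D).
Proof.
  unfold twin_classes. split.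
  - intros x. left; reflexivity.
  - intros x y [->|[Hxy HD]]; [left|right]; auto. rewrite <- Hxy. auto.
  - intros x y z [->|[Hxy HD]] [<-|[Hyz HD']]; auto; right; split; congruence.
Qed.

Lemma div2_twin x q : x = q + q \/ x = S (q + q) <-> Nat.div2 x = q.
Proof.
  split.
  - intros [->| ->]; replace (q + q) with (2 * q) by lia;
      [apply Nat.div2_double|apply Nat.div2_succ_double].
  - intros <-. pose proof (Nat.div2_odd x) as Hx. destruct (Nat.odd x); simpl in Hx; lia.
Qed.

Definition diag (m q : nat) : Prop := ~ sat m q (code_list [2 * q; S (2 * q)]).

Lemma twin_classes_diag_not_Sigma0 m : ~ Sigma0 (S m) (twin_classes (diag m)).
Proof.
  intros [f [Hf Hs]]. rewrite isSigma_iff in Hf.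
  destruct (sat_universal m f Hf) as [e He].
  specialize (Hs (2 * e) (S (2 * e))). specialize (He [2 * e; S (2 * e)]).
  assert (Htwin : twin_classes (diag m) (2 * e) (S (2 * e)) <-> diag m e).
  { unfold twin_classes. rewrite Nat.div2_double, Nat.div2_succ_double.
    split; [intros [H|[_ H]]; [lia|exact H]|intros H; right; auto]. }
  unfold diag in Htwin.
  change (env2 (2 * e) (S (2 * e))) with (env_of_list [2 * e; S (2 * e)]) in Hs.
  tauto.
Qed.

Definition ntwin (x q : nterm) : nform := nor (neq x (nplus q q)) (neq x (nsucc (nplus q q))).
Definition ncode2 (a b : nterm) : nterm := nsucc (npair a (nsucc (npair b nzero))).

Lemma in_class_diag_div2 m : exists h, in_class false (S m) h /\
  forall env, fholds env h <-> diag m (Nat.div2 (env 0)).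
Proof.
  destruct (in_class_sat m) as [fU [HfU HsU]].
  (* [forall k l, ~ twin x k \/ l <> <2k, 2k+1> \/ ~ sat m k l], with l, k, x at
     indices 0-2 *)
  set (f1 := frename (fun j => match j with 0 => 1 | _ => 0 end) (fneg fU)).
  assert (Hf1 : in_class false (S m) f1) by (apply in_class_frename, (in_class_fneg fU true), HfU).
  destruct (in_class_guarded_prefix f1 false (S m) Hf1 [] false
    (compile id_ctx (nor (nnot (ntwin (nvar 2) (nvar 1)))
                         (nnot (neq (nvar 0) (ncode2 (nplus (nvar 1) (nvar 1))
                                                     (nsucc (nplus (nvar 1) (nvar 1))))))))
    (fun k => k) (fun k => k)) as [g [Hg Hsg]].
  exists (fforall (fforall g)). split; [simpl; repeat split; auto; lia|].
  intros env. cbn [fholds]. setoid_rewrite Hsg. unfold guarded; cbn [prefix_holds conn].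
  setoid_rewrite bholds_compile_id. unfold f1. setoid_rewrite fholds_frename.
  setoid_rewrite fholds_fneg. setoid_rewrite HsU.
  cbn [nholds ntwin ncode2 neval idx id_ctx Nat.eqb scons].
  unfold diag. rewrite <- Nat.double_twice. unfold Nat.double.
  split.
  - intros H HU.
    destruct (H (Nat.div2 (env 0)) (code_list [Nat.div2 (env 0) + Nat.div2 (env 0);
                                                S (Nat.div2 (env 0) + Nat.div2 (env 0))]))
      as [[Hx|Hl]|Hs]; [apply Hx, div2_twin; reflexivity|apply Hl; reflexivity|exact (Hs HU)].
  - intros H k l.
    destruct (classic (env 0 = k + k \/ env 0 = S (k + k))) as [Hk|Hk]; [|left; left; exact Hk].
    apply div2_twin in Hk. subst k.
    destruct (Nat.eq_dec l (code_list [Nat.div2 (env 0) + Nat.div2 (env 0);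
                                       S (Nat.div2 (env 0) + Nat.div2 (env 0))])) as [->|Hl];
      [right; exact H|left; right; exact Hl].
Qed.

Definition nsame_twin : nform :=
  nex 20 (nsucc (nvar 0)) (nand (ntwin (nvar 0) (nvar 20)) (ntwin (nvar 1) (nvar 20))).

Lemma nholds_nsame_twin a : nholds a nsame_twin <-> Nat.div2 (a 0) = Nat.div2 (a 1).
Proof.
  cbn [nholds nsame_twin ntwin neval upd Nat.eqb]. setoid_rewrite div2_twin.
  split; [intros [q [_ [<- <-]]]; reflexivity|intros Hxy].
  exists (Nat.div2 (a 0)). split; [pose proof (Nat.le_div2_diag_l (a 0)); lia|auto].
Qed.

Lemma Pi0_twin_classes n D : (exists h, in_class false n h /\
  forall env, fholds env h <-> D (Nat.div2 (env 0))) -> Pi0 n (twin_classes D).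
Proof.
  intros [h [Hh HsD]].
  destruct (in_class_guarded_prefix h false n Hh [] true (compile id_ctx nsame_twin)
    (fun k => k) (fun k => k)) as [g [Hg Hsg]].
  destruct (in_class_guarded_prefix g false n Hg [] false (compile id_ctx (neq (nvar 0) (nvar 1)))
    (fun k => k) (fun k => k)) as [f [Hf Hsf]].
  exists f. split; [apply isPi_iff, Hf|]. intros x y.
  rewrite Hsf. unfold guarded; cbn [prefix_holds conn]. rewrite bholds_compile_id.
  rewrite Hsg. unfold guarded; cbn [prefix_holds conn]. rewrite bholds_compile_id.
  rewrite nholds_nsame_twin, HsD. reflexivity.
Qed.

Lemma twin_classes_diag_Pi0 m : Pi0 (S m) (twin_classes (diag m)).
Proof. apply Pi0_twin_classes, in_class_diag_div2. Qed.

Theorem proposition3p1 (n : nat) (hn : 1 <= n) :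
  (forall E : nat -> nat -> Prop,
      Equivalence E -> ~ Sigma0 n E -> ~ graphable (Sigma0 n) E) /\
  (exists E : nat -> nat -> Prop,
      Equivalence E /\ Pi0 n E /\ ~ graphable (Sigma0 n) E).
Proof.
  assert (Hgraph : forall E, ~ Sigma0 n E -> ~ graphable (Sigma0 n) E)
    by (intros E HE HG; exact (HE (Sigma0_of_graphable n E hn HG))).
  split; [intros E _; apply Hgraph|].
  destruct n as [|m]; [lia|].
  exists (twin_classes (diag m)). split; [apply twin_classes_equiv|]. split.
  - apply twin_classes_diag_Pi0.
  - apply Hgraph, twin_classes_diag_not_Sigma0.
Qed.
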